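(* Let $k$ be a field, $A$ and $B$ $k$-algebras, and $f: A \to M_n(B)$ a homomorphism of $k$-algebras. Consider the free product $B \ast_k k\langle (v_{ij})_{i,j=1}^n\rangle$ and the $n \times n$ matrix $V = (v_{ij})_{i,j=1}^n$ over it. Let $I_f$ be the two-sided ideal of $B \ast_k k\langle (v_{ij})_{i,j=1}^n\rangle$ generated by all entries of the matrices $V f(a) - f(a) V$ for $a \in A$. Then $f$ is a ring epimorphism if and only if $I_f$ contains $v_{ii} - v_{jj}$ for all $i,j \in \{1,\dots,n\}$, $v_{i'j'}$ for all $i' \neq j'$ in $\{1,\dots,n\}$, and $b v_{ii} - v_{ii} b$ for all $i \in \{1,\dots,n\}$ and $b \in B$.
   Context: A ring homomorphism $\varphi: R \to S$ is a ring epimorphism if for any two ring homomorphisms $\varrho_1, \varrho_2: S \to T$ with $\varrho_1\varphi = \varrho_2\varphi$ one has $\varrho_1 = \varrho_2$. $k\langle (v_{ij})\rangle$ denotes the free associative $k$-algebra on the $n^2$ indeterminates $v_{ij}$, and $\ast_k$ denotes the free product (coproduct) of $k$-algebras. *)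

From HB Require Import structures.
From mathcomp Require Import all_boot all_order all_algebra.
Set Implicit Arguments. Unset Strict Implicit. Unset Printing Implicit Defensive.
Import GRing.Theory.
Local Open Scope ring_scope.

Definition ring_epi (R S : pzRingType) (phi : R -> S) : Prop :=
  forall (T : pzRingType) (r1 r2 : {rmorphism S -> T}),
    (forall x, r1 (phi x) = r2 (phi x)) -> forall y, r1 y = r2 y.

Inductive in_ideal (R : pzRingType) (G : R -> Prop) : R -> Prop :=
| ideal_gen x : G x -> in_ideal G x
| ideal_0 : in_ideal G 0
| ideal_add x y : in_ideal G x -> in_ideal G y -> in_ideal G (x + y)
| ideal_mul r x s : in_ideal G x -> in_ideal G (r * x * s).

(* (P, iota, V) is the free product B *_k k<(v_ij)>, with V = (v_ij):
   the coproduct of B and the free algebra on n^2 generators in the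
   category of k-algebras.  A k-algebra map k<(v_ij)> -> T is the same as
   a matrix W in M_n(T) (v_ij |-> W i j). *)
Definition is_free_product (k : fieldType) (B P : algType k)
  (iota : {lrmorphism B -> P}) (n : nat) (V : 'M[P]_n) : Prop :=
  forall (T : algType k) (g : {lrmorphism B -> T}) (W : 'M[T]_n),
    (exists h : {lrmorphism P -> T},
        (forall b, h (iota b) = g b) /\ map_mx h V = W) /\
    (forall h1 h2 : {lrmorphism P -> T},
        (forall b, h1 (iota b) = h2 (iota b)) ->
        map_mx h1 V = map_mx h2 V -> forall p, h1 p = h2 p).

(* If f is an epimorphism, pass to P / I_f, where the matrix V commutes with
   the image of f(A).  The ring maps x |-> [[x, 0], [0, x]] and
   x |-> [[x, xV - Vx], [0, x]] from M_n(B) to 2 x 2 matrices over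
   M_n(P / I_f) agree on f(A), hence everywhere, so V commutes with every
   matrix unit e_ij and every scalar b; these are the three families of
   relations.
   Conversely, let r1, r2 : M_n(B) -> T agree on f(A); they then agree on the
   scalars c1 (c in k), which lie in f(A).  The 2 x 2 matrices over T commuting
   with these scalars form a k-algebra, and the free product property maps P
   into it by b |-> [[r1 b, 0], [0, r2 b]] and v_ij |-> [[0, c_ij], [0, 0]],
   where c_ij = r1(e_0i) r2(e_j0).  This map kills I_f, so the relations hold
   for the c_ij; they make X = sum_l r1(e_l0) c_00 r2(e_0l) equal to 1, and
   then r1(b e_ij) = r1(b e_ij) X = X r2(b e_ij) = r2(b e_ij). *)

From HB Require Import structures.
From mathcomp Require Import all_boot all_order all_algebra.
From mathcomp Require Import ring_quotient generic_quotient boolp.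
Set Implicit Arguments. Unset Strict Implicit. Unset Printing Implicit Defensive.
Import GRing.Theory.
Local Open Scope ring_scope.

Section IdealQuotient.
Variables (R : pzRingType) (G : R -> Prop).

Definition ideal_of : {pred R} := fun x => `[< in_ideal G x >].

Lemma ideal_ofP x : reflect (in_ideal G x) (x \in ideal_of).
Proof. exact: asboolP. Qed.

Lemma ideal_ofM r x s : x \in ideal_of -> r * x * s \in ideal_of.
Proof. by move=> /ideal_ofP Ix; apply/ideal_ofP; apply: ideal_mul. Qed.

Lemma ideal_of_zmod_closed : zmod_closed ideal_of.
Proof.
split=> [|x y /ideal_ofP Ix Iy]; first exact/ideal_ofP/ideal_0.
apply/ideal_ofP/ideal_add => //; apply/ideal_ofP.
by rewrite -mulN1r -[_ * y]mulr1 ideal_ofM.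
Qed.

HB.instance Definition _ := GRing.isZmodClosed.Build R ideal_of ideal_of_zmod_closed.

Local Open Scope quotient_scope.

Definition quot_ring := Quotient.quot ideal_of.
HB.instance Definition _ := GRing.Zmodule.on quot_ring.
HB.instance Definition _ := EqQuotient.on quot_ring.

Lemma quot_eqE x y : (x == y %[mod quot_ring]) = (x - y \in ideal_of).
Proof. by rewrite Quotient.idealrBE. Qed.

Definition quot_one : quot_ring := lift_cst quot_ring 1.
Definition quot_mul := lift_op2 quot_ring *%R.
Canonical pi_quot_one_morph := PiConst quot_one.

Lemma pi_quot_mul : {morph \pi_quot_ring : x y / x * y >-> quot_mul x y}.
Proof.
move=> x y; unlock quot_mul; apply/eqP; rewrite quot_eqE.
set x' := repr _; set y' := repr _.
have Ix : x - x' \in ideal_of by rewrite -quot_eqE /x' reprK.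
have Iy : y - y' \in ideal_of by rewrite -quot_eqE /y' reprK.
have -> : x * y - x' * y' = 1 * (x - x') * y + x' * (y - y') * 1.
  by rewrite mulr1 mul1r mulrBl mulrBr addrA addrNK.
by rewrite rpredD ?ideal_ofM.
Qed.
Canonical pi_quot_mul_morph := PiMorph2 pi_quot_mul.

Lemma quot_mulA : associative quot_mul.
Proof. by move=> x y z; rewrite -[x]reprK -[y]reprK -[z]reprK !piE mulrA. Qed.
Lemma quot_mul1q : left_id quot_one quot_mul.
Proof. by move=> x; rewrite -[x]reprK !piE mul1r. Qed.
Lemma quot_mulq1 : right_id quot_one quot_mul.
Proof. by move=> x; rewrite -[x]reprK !piE mulr1. Qed.
Lemma quot_mulDl : left_distributive quot_mul +%R.
Proof. by move=> x y z; rewrite -[x]reprK -[y]reprK -[z]reprK !piE mulrDl. Qed.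
Lemma quot_mulDr : right_distributive quot_mul +%R.
Proof. by move=> x y z; rewrite -[x]reprK -[y]reprK -[z]reprK !piE mulrDr. Qed.

HB.instance Definition _ := GRing.Zmodule_isPzRing.Build quot_ring
  quot_mulA quot_mul1q quot_mulq1 quot_mulDl quot_mulDr.

Definition quot_proj (x : R) : quot_ring := \pi x.

Lemma quot_proj_is_zmod_morphism : zmod_morphism quot_proj.
Proof. by move=> x y; rewrite /quot_proj !piE. Qed.
Lemma quot_proj_is_monoid_morphism : monoid_morphism quot_proj.
Proof. by split=> [|x y]; rewrite /quot_proj !piE. Qed.
HB.instance Definition _ := GRing.isZmodMorphism.Build R quot_ring quot_proj
  quot_proj_is_zmod_morphism.
HB.instance Definition _ := GRing.isMonoidMorphism.Build R quot_ring quot_proj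
  quot_proj_is_monoid_morphism.

Lemma quot_proj_eq0 x : (quot_proj x = 0) <-> in_ideal G x.
Proof.
rewrite -(rmorph0 quot_proj); split=> [/eqP|Ix].
  by rewrite quot_eqE subr0 => /ideal_ofP.
by apply/eqP; rewrite quot_eqE subr0; apply/ideal_ofP.
Qed.

Lemma quot_proj_gen x : G x -> quot_proj x = 0.
Proof. by move=> Gx; apply/quot_proj_eq0/ideal_gen. Qed.

End IdealQuotient.

Lemma rmorph_ideal_eq0 (R S : pzRingType) (h : {rmorphism R -> S}) (G : R -> Prop) :
  (forall x, G x -> h x = 0) -> forall x, in_ideal G x -> h x = 0.
Proof.
move=> hG x; elim=> [y /hG | | y z _ hy _ hz | r y s _ hy]; rewrite ?rmorph0 //.
  by rewrite rmorphD hy hz addr0.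
by rewrite !rmorphM hy mulr0 mul0r.
Qed.

Section UpperTriangular.
Variable T : pzRingType.

Definition trimx (a b d : T) : 'M[T]_(1 + 1) := block_mx a%:M b%:M 0 d%:M.

Lemma trimxM a b d a' b' d' :
  trimx a b d * trimx a' b' d' = trimx (a * a') (a * b' + b * d') (d * d').
Proof.
rewrite -mulmxE mulmx_block !mulmx0 !mul0mx !addr0 add0r.
by rewrite -!scalar_mxM -raddfD.
Qed.

Lemma trimx0 : trimx 0 0 0 = 0.
Proof. by rewrite /trimx !raddf0 block_mx0. Qed.

Lemma trimxD a b d a' b' d' :
  trimx a b d + trimx a' b' d' = trimx (a + a') (b + b') (d + d').
Proof. by rewrite add_block_mx -!raddfD addr0. Qed.

Lemma trimxB a b d a' b' d' :
  trimx a b d - trimx a' b' d' = trimx (a - a') (b - b') (d - d').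
Proof. by rewrite opp_block_mx add_block_mx -!raddfN -!raddfD oppr0 addr0. Qed.

Lemma scalar_trimx a : a%:M = trimx a 0 a.
Proof. by rewrite /trimx raddf0 -scalar_mx_block. Qed.

Lemma trimx_inj a b d a' b' d' :
  trimx a b d = trimx a' b' d' -> [/\ a = a', b = b' & d = d'].
Proof.
have scalar_inj (x y : T) : x%:M = y%:M :> 'M_1 -> x = y.
  by move/matrixP/(_ 0 0); rewrite !mxE.
by case/eq_block_mx => /scalar_inj-> /scalar_inj-> _ /scalar_inj->.
Qed.

Lemma sum_trimx_mid (I : finType) (x : I -> T) :
  \sum_i trimx 0 (x i) 0 = trimx 0 (\sum_i x i) 0.
Proof.
apply: (big_rec2 (fun s t => s = trimx 0 t 0)); first by rewrite trimx0.
by move=> i s t _ ->; rewrite trimxD !addr0.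
Qed.

End UpperTriangular.

Section Dominion.
Variables (S Q : pzRingType) (psi : {rmorphism S -> Q}) (u : Q).

Definition trimx_diag (y : S) := trimx (psi y) 0 (psi y).
Definition trimx_inner_der (y : S) := trimx (psi y) (psi y * u - u * psi y) (psi y).

Lemma trimx_diag_is_zmod_morphism : zmod_morphism trimx_diag.
Proof. by move=> x y; rewrite /trimx_diag trimxB rmorphB subr0. Qed.
Lemma trimx_diag_is_monoid_morphism : monoid_morphism trimx_diag.
Proof.
split=> [|x y]; first by rewrite /trimx_diag rmorph1 -scalar_trimx.
by rewrite /trimx_diag trimxM rmorphM mulr0 mul0r addr0.
Qed.
HB.instance Definition _ := GRing.isZmodMorphism.Build S _ trimx_diag
  trimx_diag_is_zmod_morphism.
HB.instance Definition _ := GRing.isMonoidMorphism.Build S _ trimx_diag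
  trimx_diag_is_monoid_morphism.

Lemma trimx_inner_der_is_zmod_morphism : zmod_morphism trimx_inner_der.
Proof.
move=> x y; rewrite /trimx_inner_der trimxB rmorphB mulrBl mulrBr.
by congr trimx; rewrite !opprD !opprK addrACA.
Qed.
Lemma trimx_inner_der_is_monoid_morphism : monoid_morphism trimx_inner_der.
Proof.
split=> [|x y]; first by rewrite /trimx_inner_der rmorph1 mul1r mulr1 subrr -scalar_trimx.
rewrite /trimx_inner_der trimxM rmorphM; congr trimx.
by rewrite mulrBr mulrBl !mulrA addrA addrNK.
Qed.
HB.instance Definition _ := GRing.isZmodMorphism.Build S _ trimx_inner_der
  trimx_inner_der_is_zmod_morphism.
HB.instance Definition _ := GRing.isMonoidMorphism.Build S _ trimx_inner_der
  trimx_inner_der_is_monoid_morphism.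

End Dominion.

Lemma ring_epi_comm (R S Q : pzRingType) (phi : R -> S) (psi : {rmorphism S -> Q})
    (u : Q) :
  ring_epi phi -> (forall x, psi (phi x) * u = u * psi (phi x)) ->
  forall y, psi y * u = u * psi y.
Proof.
move=> phi_epi u_comm y.
have trimx_maps_agree x : trimx_diag psi (phi x) = trimx_inner_der psi u (phi x).
  by rewrite /trimx_diag /trimx_inner_der u_comm subrr.
have [_ /eqP + _] := trimx_inj (phi_epi _ _ _ trimx_maps_agree y).
by rewrite eq_sym subr_eq0 => /eqP.
Qed.

Section NontrivialTarget.
Variables (S T : pzRingType) (T_nontrivial : (1 : T) != 0).

(* The proof argument lets inference find the nonzero-ring instance below. *)
Definition nz_target of (1 : T) != 0 : Type := T.
Local Notation NT := (nz_target T_nontrivial).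
HB.instance Definition _ := GRing.PzRing.on NT.
HB.instance Definition _ := GRing.PzSemiRing_isNonZero.Build NT T_nontrivial.

Definition to_nz_target (r : {rmorphism S -> T}) : S -> NT := r.

Section ToNzTarget.
Variable r : {rmorphism S -> T}.
Lemma to_nz_target_is_zmod_morphism : zmod_morphism (to_nz_target r).
Proof. exact: rmorphB. Qed.
Lemma to_nz_target_is_monoid_morphism : monoid_morphism (to_nz_target r).
Proof. by split; [exact: rmorph1 | exact: rmorphM]. Qed.
HB.instance Definition _ := GRing.isZmodMorphism.Build S NT (to_nz_target r)
  to_nz_target_is_zmod_morphism.
HB.instance Definition _ := GRing.isMonoidMorphism.Build S NT (to_nz_target r)
  to_nz_target_is_monoid_morphism.
End ToNzTarget.

End NontrivialTarget.

Lemma ring_epi_nz (R S : pzRingType) (phi : R -> S) :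
  (forall (T : nzRingType) (r1 r2 : {rmorphism S -> T}),
     (forall x, r1 (phi x) = r2 (phi x)) -> forall y, r1 y = r2 y) ->
  ring_epi phi.
Proof.
move=> nz_epi T r1 r2 agree y; have [T0|T1] := eqVneq (1 : T) 0.
  by rewrite -[r1 y]mulr1 -[r2 y]mulr1 T0 !mulr0.
exact: (nz_epi _ (to_nz_target T1 r1) (to_nz_target T1 r2) agree).
Qed.

Section MatrixUnitEntries.
Variables (R : pzRingType) (m n p : nat).

Lemma mulmx_delta_entry (U : 'M[R]_(m, n)) (i : 'I_n) (j : 'I_p) k l :
  (U *m delta_mx i j) k l = U k i *+ (l == j).
Proof.
rewrite mxE (bigD1 i) //= big1 => [|t /negbTE ti]; last by rewrite mxE ti mulr0.
by rewrite mxE eqxx addr0 mulr_natr.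
Qed.

Lemma delta_mulmx_entry (U : 'M[R]_(n, p)) (i : 'I_m) (j : 'I_n) k l :
  (delta_mx i j *m U) k l = U j l *+ (k == i).
Proof.
rewrite mxE (bigD1 j) //= big1 => [|t /negbTE tj]; last by rewrite mxE tj andbF mul0r.
by rewrite mxE eqxx andbT addr0 mulr_natl.
Qed.

Lemma mulmx_scalar_entry (U : 'M[R]_(m, n)) a k l : (U *m a%:M) k l = U k l * a.
Proof.
rewrite mxE (bigD1 l) //= big1 => [|t /negbTE tl]; last by rewrite mxE tl mulr0.
by rewrite mxE eqxx mulr1n addr0.
Qed.

End MatrixUnitEntries.

Section CommMatrixUnits.
Variables (R : pzRingType) (n : nat) (U : 'M[R]_n).

Lemma comm_delta_diag i j :
  U *m delta_mx i j = delta_mx i j *m U -> U i i = U j j.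
Proof.
by move/matrixP/(_ i j); rewrite mulmx_delta_entry delta_mulmx_entry !eqxx.
Qed.

Lemma comm_delta_offdiag i j :
  i != j -> U *m delta_mx i i = delta_mx i i *m U -> U i j = 0.
Proof.
move=> /negbTE neq_ij /matrixP/(_ i j).
by rewrite mulmx_delta_entry delta_mulmx_entry eqxx eq_sym neq_ij.
Qed.

Lemma comm_scalar_diag a i : U *m a%:M = a%:M *m U -> U i i * a = a * U i i.
Proof. by move/matrixP/(_ i i); rewrite mulmx_scalar_entry mul_scalar_mx mxE. Qed.

End CommMatrixUnits.

Section SquareMatrixUnits.
Variables (B : pzRingType) (n : nat).

Lemma delta_mxM (i j l m : 'I_n.+1) :
  delta_mx i j * delta_mx l m = delta_mx i m *+ (j == l) :> 'M[B]_n.+1.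
Proof. exact: mul_delta_mx_cond. Qed.

Lemma scalar_delta_mxC (b : B) (i j : 'I_n.+1) : b%:M * delta_mx i j = delta_mx i j * b%:M.
Proof.
apply/matrixP=> k l; rewrite -!mulmxE mul_scalar_mx mulmx_scalar_entry !mxE.
by case: (_ && _); rewrite ?mulr1 ?mul1r ?mulr0 ?mul0r.
Qed.

Lemma mulmx_delta_col (F : 'M[B]_n.+1) j :
  F * delta_mx j 0 = \sum_l delta_mx l 0 * (F l j)%:M.
Proof.
apply/matrixP=> a b; rewrite -mulmxE mulmx_delta_entry summxE (bigD1 a) //=.
rewrite big1 => [|l /negbTE neq_la]; last by rewrite delta_mulmx_entry eq_sym neq_la.
by rewrite delta_mulmx_entry eqxx mxE addr0 mulr1n eq_sym.
Qed.

Lemma delta_row_mulmx (F : 'M[B]_n.+1) i :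
  delta_mx 0 i * F = \sum_l (F i l)%:M * delta_mx 0 l.
Proof.
apply/matrixP=> a b; rewrite -mulmxE delta_mulmx_entry summxE (bigD1 b) //=.
rewrite big1 => [|l /negbTE neq_lb].
  by rewrite addr0 mul_scalar_mx !mxE eqxx andbT mulr_natr.
by rewrite mul_scalar_mx !mxE [b == l]eq_sym neq_lb andbF mulr0.
Qed.

End SquareMatrixUnits.

Definition commutator_entries (A B P : pzRingType) (n : nat) (f : A -> 'M[B]_n)
    (iota : B -> P) (V : 'M[P]_n) (p : P) : Prop :=
  exists a i j, p = (V *m map_mx iota (f a) - map_mx iota (f a) *m V) i j.

Definition central_scalar_mod (B P : pzRingType) (n : nat) (I : P -> Prop)
    (iota : B -> P) (V : 'M[P]_n) : Prop :=
  [/\ forall i j, I (V i i - V j j),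
      forall i j, i != j -> I (V i j) &
      forall i b, I (iota b * V i i - V i i * iota b)].

Lemma ring_epi_central_scalar (A B P : pzRingType) (n : nat)
    (f : A -> 'M[B]_n.+1) (iota : {rmorphism B -> P}) (V : 'M[P]_n.+1) :
  ring_epi f -> central_scalar_mod (in_ideal (commutator_entries f iota V)) iota V.
Proof.
move=> f_epi; set G := commutator_entries f iota V.
pose pi : {rmorphism P -> quot_ring G} := quot_proj G; pose U := map_mx pi V.
have U_comm a : map_mx (pi \o iota) (f a) * U = U * map_mx (pi \o iota) (f a).
  apply/eqP; rewrite eq_sym -subr_eq0 -!mulmxE.
  have -> : U *m map_mx (pi \o iota) (f a) - map_mx (pi \o iota) (f a) *m U =
      map_mx pi (V *m map_mx iota (f a) - map_mx iota (f a) *m V).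
    by rewrite map_mxB !map_mxM -map_mx_comp.
  by apply/eqP/matrixP=> i j; rewrite mxE [RHS]mxE; apply: quot_proj_gen; exists a, i, j.
have U_central y : map_mx (pi \o iota) y * U = U * map_mx (pi \o iota) y.
  exact: (ring_epi_comm f_epi U_comm).
have ideal_diff x y : pi x = pi y -> in_ideal G (x - y).
  by move=> eq_xy; apply/quot_proj_eq0/eqP; rewrite rmorphB subr_eq0; apply/eqP.
split=> [i j | i j neq_ij | i b].
- apply: ideal_diff; have := U_central (delta_mx i j).
  by rewrite map_delta_mx => /esym/comm_delta_diag; rewrite /U !mxE.
- apply/quot_proj_eq0; have := U_central (delta_mx i i).
  by rewrite map_delta_mx => /esym/(comm_delta_offdiag neq_ij); rewrite /U mxE.
- apply: ideal_diff; rewrite !rmorphM; have := U_central b%:M.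
  by rewrite map_scalar_mx => /esym/(comm_scalar_diag i); rewrite /U mxE.
Qed.

Section MatrixRmorphisms.
Variables (B T : pzRingType) (n : nat) (r1 r2 : {rmorphism 'M[B]_n.+1 -> T}).

Definition corner (i j : 'I_n.+1) := r1 (delta_mx 0 i) * r2 (delta_mx j 0).

Lemma corner_comm (F : 'M[B]_n.+1) i j : r1 F = r2 F ->
  \sum_l corner i l * r2 (F l j)%:M = \sum_l r1 (F i l)%:M * corner l j.
Proof.
move=> eqF; rewrite /corner.
transitivity (r1 (delta_mx 0 i) * r2 F * r2 (delta_mx j 0)).
  rewrite -mulrA -rmorphM mulmx_delta_col rmorph_sum mulr_sumr.
  by apply: eq_bigr => l _; rewrite rmorphM !mulrA.
rewrite -eqF -rmorphM delta_row_mulmx rmorph_sum !mulr_suml.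
by apply: eq_bigr => l _; rewrite rmorphM !mulrA.
Qed.

Hypothesis corner_diag : forall i, corner i i = corner 0 0.
Hypothesis corner_offdiag : forall i j, i != j -> corner i j = 0.
Hypothesis corner_scalar : forall b, r1 b%:M * corner 0 0 = corner 0 0 * r2 b%:M.

Lemma corner_sum1 : \sum_l r1 (delta_mx l 0) * corner 0 0 * r2 (delta_mx 0 l) = 1.
Proof.
have diag_split i j : r1 (delta_mx i i) * r2 (delta_mx j j) =
    r1 (delta_mx i 0) * corner i j * r2 (delta_mx 0 j).
  by rewrite /corner !mulrA -rmorphM -mulrA -rmorphM !delta_mxM !eqxx.
have -> : 1 = r1 1%:M * r2 1%:M by rewrite !rmorph1 mulr1.
rewrite mx1_sum_delta !rmorph_sum mulr_suml; apply: eq_bigr => i _.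
rewrite mulr_sumr (bigD1 i) //= big1 => [|j neq_ji]; last first.
  by rewrite diag_split corner_offdiag 1?eq_sym // mulr0 mul0r.
by rewrite addr0 diag_split corner_diag.
Qed.

Lemma rmorph_scalar_delta_eq (b : B) i j :
  r1 (b%:M * delta_mx i j) = r2 (b%:M * delta_mx i j).
Proof.
have r1_absorb l : r1 (b%:M * delta_mx i j) * r1 (delta_mx l 0) =
    r1 (delta_mx i 0) * r1 b%:M *+ (j == l).
  by rewrite -rmorphM -mulrA delta_mxM mulrnAr rmorphMn scalar_delta_mxC rmorphM.
have r2_absorb l : r2 (delta_mx 0 l) * r2 (b%:M * delta_mx i j) =
    r2 (b%:M * delta_mx 0 j) *+ (l == i).
  by rewrite -rmorphM mulrA -scalar_delta_mxC -mulrA delta_mxM mulrnAr rmorphMn.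
transitivity (r1 (delta_mx i 0) * corner 0 0 * r2 (b%:M * delta_mx 0 j)).
  rewrite -[LHS]mulr1 -corner_sum1 mulr_sumr (bigD1 j) //= big1 => [|l neq_lj].
    rewrite addr0 2!mulrA r1_absorb eqxx mulr1n -(mulrA _ (r1 _)) corner_scalar.
    by rewrite mulrA -mulrA -rmorphM.
  by rewrite 2!mulrA r1_absorb eq_sym (negbTE neq_lj) mulr0n !mul0r.
rewrite -[RHS]mul1r -corner_sum1 mulr_suml (bigD1 i) //= big1 => [|l neq_li].
  by rewrite addr0 -[in RHS]mulrA r2_absorb eqxx mulr1n.
by rewrite -mulrA r2_absorb (negbTE neq_li) mulr0n mulr0.
Qed.

Lemma rmorph_mx_eq_corner y : r1 y = r2 y.
Proof.
rewrite (matrix_sum_delta y) !rmorph_sum; apply: eq_bigr => i _.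
rewrite !rmorph_sum; apply: eq_bigr => j _.
by rewrite -mul_scalar_mx mulmxE rmorph_scalar_delta_eq.
Qed.

End MatrixRmorphisms.

Section CentralizerAlgebra.
Variables (R : comPzRingType) (S : nzRingType) (phi : {rmorphism R -> S}).

Definition centralizer : {pred S} := fun s => `[< forall c, phi c * s = s * phi c >].

Lemma centralizerP s : reflect (forall c, phi c * s = s * phi c) (s \in centralizer).
Proof. exact: asboolP. Qed.

Lemma centralizer_subring_closed : subring_closed centralizer.
Proof.
split=> [|x y /centralizerP Cx /centralizerP Cy|x y /centralizerP Cx /centralizerP Cy];
  apply/centralizerP=> c; first by rewrite mulr1 mul1r.
  by rewrite mulrBr mulrBl Cx Cy.
by rewrite mulrA Cx -mulrA Cy mulrA.
Qed.

Definition centralizer_alg := {s : S | s \in centralizer}.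
HB.instance Definition _ :=
  [isSub for (@sval _ (fun s => s \in centralizer) : centralizer_alg -> S)].
HB.instance Definition _ := [Choice of centralizer_alg by <:].
HB.instance Definition _ := GRing.SubChoice_isSubNzRing.Build S centralizer
  centralizer_alg centralizer_subring_closed.

Lemma phi_centralizer c : phi c \in centralizer.
Proof. by apply/centralizerP=> c'; rewrite -!rmorphM mulrC. Qed.

Definition calg_phi c : centralizer_alg := Sub (phi c) (phi_centralizer c).

Lemma calg_phiC c (x : centralizer_alg) : calg_phi c * x = x * calg_phi c.
Proof. by have /centralizerP Cx := valP x; apply: val_inj; rewrite !rmorphM /= Cx. Qed.

Definition calg_scale c (x : centralizer_alg) := calg_phi c * x.

Lemma calg_scaleA a b x : calg_scale a (calg_scale b x) = calg_scale (a * b) x.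
Proof. by apply: val_inj; rewrite !rmorphM /= rmorphM mulrA. Qed.
Lemma calg_scale1 : left_id 1 calg_scale.
Proof. by move=> x; apply: val_inj; rewrite rmorphM /= rmorph1 mul1r. Qed.
Lemma calg_scaleDr : right_distributive calg_scale +%R.
Proof. by move=> c x y; rewrite /calg_scale mulrDr. Qed.
Lemma calg_scaleDl x : {morph calg_scale^~ x : a b / a + b}.
Proof. by move=> a b; apply: val_inj; rewrite !rmorphD !rmorphM /= rmorphD mulrDl. Qed.

HB.instance Definition _ := GRing.Zmodule_isLmodule.Build R centralizer_alg
  calg_scaleA calg_scale1 calg_scaleDr calg_scaleDl.

Lemma calg_scaleAl c (x y : centralizer_alg) : c *: (x * y) = c *: x * y.
Proof. exact: mulrA. Qed.
HB.instance Definition _ :=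
  GRing.Lmodule_isLalgebra.Build R centralizer_alg calg_scaleAl.

Lemma calg_scaleAr c (x y : centralizer_alg) : c *: (x * y) = x * (c *: y).
Proof. by rewrite /GRing.scale /= /calg_scale mulrA calg_phiC mulrA. Qed.
HB.instance Definition _ :=
  GRing.Lalgebra_isAlgebra.Build R centralizer_alg calg_scaleAr.

Lemma val_calg_scale c (x : centralizer_alg) : val (c *: x) = phi c * val x.
Proof. exact: rmorphM. Qed.

End CentralizerAlgebra.

Section FreeProductTarget.
Variables (k : fieldType) (B : algType k) (n : nat) (T : nzRingType).
Variables (r1 r2 : {rmorphism 'M[B]_n.+1 -> T}).
Hypothesis r12_scalar : forall c : k, r1 (c%:A)%:M = r2 (c%:A)%:M.

Definition kscalar : {rmorphism k -> 'M[T]_(1 + 1)} :=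
  scalar_mx \o r1 \o scalar_mx \o in_alg B.
Local Notation Tk := (centralizer_alg kscalar).

Lemma alg_scalar_mxC c (x : 'M[B]_n.+1) : (c%:A)%:M * x = x * (c%:A)%:M.
Proof.
apply/matrixP=> i j; rewrite -!mulmxE mul_scalar_mx mulmx_scalar_entry !mxE.
by rewrite mulr_algl mulr_algr.
Qed.

Definition kcentral (t : T) := forall c, r1 (c%:A)%:M * t = t * r1 (c%:A)%:M.

Lemma kcentral0 : kcentral 0.
Proof. by move=> c; rewrite mulr0 mul0r. Qed.

Lemma kcentral_r1 x : kcentral (r1 x).
Proof. by move=> c; rewrite -!rmorphM alg_scalar_mxC. Qed.

Lemma kcentral_r2 x : kcentral (r2 x).
Proof. by move=> c; rewrite r12_scalar -!rmorphM alg_scalar_mxC. Qed.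

Lemma kcentralM s t : kcentral s -> kcentral t -> kcentral (s * t).
Proof. by move=> Cs Ct c; rewrite mulrA Cs -mulrA Ct mulrA. Qed.

Lemma trimx_centralizer a b d :
  kcentral a -> kcentral b -> kcentral d -> trimx a b d \in centralizer kscalar.
Proof.
move=> Ca Cb Cd; apply/centralizerP=> c.
by rewrite [kscalar c]scalar_trimx !trimxM !mulr0 !mul0r addr0 add0r Ca Cb Cd.
Qed.

Definition diag_pair (b : B) : Tk :=
  Sub (trimx (r1 b%:M) 0 (r2 b%:M))
      (trimx_centralizer (kcentral_r1 _) kcentral0 (kcentral_r2 _)).

Definition corner_mx : 'M[Tk]_n.+1 := \matrix_(i, j)
  Sub (trimx 0 (corner r1 r2 i j) 0)
      (trimx_centralizer kcentral0 (kcentralM (kcentral_r1 _) (kcentral_r2 _)) kcentral0).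

Lemma val_diag_pair b : val (diag_pair b) = trimx (r1 b%:M) 0 (r2 b%:M).
Proof. by []. Qed.

Lemma diag_pair_is_zmod_morphism : zmod_morphism diag_pair.
Proof. by move=> x y; apply: val_inj; rewrite rmorphB /= trimxB !raddfB subr0. Qed.

Lemma diag_pair_is_monoid_morphism : monoid_morphism diag_pair.
Proof.
split=> [|x y]; apply: val_inj; rewrite ?rmorph1 ?rmorphM /=.
  by rewrite !rmorph1 -scalar_trimx.
by rewrite trimxM mulr0 mul0r addr0 !rmorphM.
Qed.

Lemma diag_pair_is_scalable : scalable diag_pair.
Proof.
move=> c b; apply: val_inj; rewrite val_calg_scale /= scalar_trimx trimxM.
by rewrite mulr0 mul0r addr0 -[c *: b]mulr_algl !rmorphM -r12_scalar.
Qed.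

HB.instance Definition _ := GRing.isZmodMorphism.Build B Tk diag_pair
  diag_pair_is_zmod_morphism.
HB.instance Definition _ := GRing.isMonoidMorphism.Build B Tk diag_pair
  diag_pair_is_monoid_morphism.
HB.instance Definition _ := GRing.isScalable.Build k B Tk *:%R diag_pair
  diag_pair_is_scalable.

Lemma val_corner_mx i j : val (corner_mx i j) = trimx 0 (corner r1 r2 i j) 0.
Proof. by rewrite mxE. Qed.

Lemma corner_mx_comm (F : 'M[B]_n.+1) : r1 F = r2 F ->
  corner_mx *m map_mx diag_pair F = map_mx diag_pair F *m corner_mx.
Proof.
move=> eqF; apply/matrixP=> i j; apply: val_inj; rewrite !mxE !rmorph_sum /=.
under eq_bigr do rewrite !mxE val_diag_pair trimxM ?mul0r ?mulr0 ?addr0 ?add0r.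
under [RHS]eq_bigr do rewrite !mxE val_diag_pair trimxM ?mul0r ?mulr0 ?addr0 ?add0r.
by rewrite !sum_trimx_mid corner_comm.
Qed.

Lemma rmorph_eq_of_central_scalar (A : pzRingType) (f : A -> 'M[B]_n.+1)
    (P : algType k) (iota : {lrmorphism B -> P}) (V : 'M[P]_n.+1) :
  is_free_product iota V ->
  central_scalar_mod (in_ideal (commutator_entries f iota V)) iota V ->
  (forall a, r1 (f a) = r2 (f a)) -> forall y, r1 y = r2 y.
Proof.
move=> free_V [V_diag V_offdiag V_comm] agree.
have [[h [h_iota h_V]] _] := free_V _ diag_pair corner_mx.
have h_entry i j : h (V i j) = corner_mx i j by rewrite -h_V mxE.
have h_ideal p : in_ideal (commutator_entries f iota V) p -> h p = 0.
  apply: rmorph_ideal_eq0 => _ [a [i [j ->]]].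
  transitivity (map_mx h (V *m map_mx iota (f a) - map_mx iota (f a) *m V) i j).
    by rewrite [RHS]mxE.
  rewrite map_mxB !map_mxM h_V -map_mx_comp.
  rewrite (eq_map_mx _ h_iota) corner_mx_comm ?agree //.
  by rewrite subrr mxE.
have hB x y : h (x - y) = h x - h y by exact: rmorphB.
have hM x y : h (x * y) = h x * h y by exact: rmorphM.
have eq_of_sub0 (x y : Tk) : x - y = 0 -> val x = val y.
  by move/eqP; rewrite subr_eq0 => /eqP->.
apply: rmorph_mx_eq_corner => [i | i j neq_ij | b].
- have := h_ideal _ (V_diag i 0); rewrite hB !h_entry => /eq_of_sub0.
  by rewrite !val_corner_mx => /trimx_inj[].
- have /(congr1 val) := h_ideal _ (V_offdiag i j neq_ij).
  by rewrite h_entry val_corner_mx raddf0 -trimx0 => /trimx_inj[].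
- have := h_ideal _ (V_comm 0 b); rewrite hB !hM h_iota h_entry => /eq_of_sub0.
  rewrite !rmorphM /= !val_corner_mx !trimxM ?mul0r ?mulr0 ?addr0 ?add0r.
  by case/trimx_inj.
Qed.

End FreeProductTarget.

Theorem mainTheorem11 (k : fieldType) (A B : algType k) (n : nat)
  (f : {rmorphism A -> 'M[B]_n.+1})
  (f_klin : forall (c : k) (a : A), f (c *: a) = map_mx ( *:%R c) (f a))
  (P : algType k) (iota : {lrmorphism B -> P}) (V : 'M[P]_n.+1)
  (hP : is_free_product iota V) :
  let If := in_ideal (fun p : P => exists (a : A) (i j : 'I_n.+1),
              p = (V *m map_mx iota (f a) - map_mx iota (f a) *m V) i j) in
  ring_epi f <->
  [/\ forall i j : 'I_n.+1, If (V i i - V j j),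
      forall i j : 'I_n.+1, i != j -> If (V i j) &
      forall (i : 'I_n.+1) (b : B), If (iota b * V i i - V i i * iota b)].
Proof.
move=> If; split; first exact: ring_epi_central_scalar.
move=> V_central_scalar; apply: ring_epi_nz => T r1 r2 agree.
have f_alg c : f (c *: 1) = (c%:A)%:M.
  rewrite f_klin rmorph1; apply/matrixP=> i j; rewrite !mxE.
  by case: (i == j); rewrite ?scaler0.
have r12_scalar c : r1 (c%:A)%:M = r2 (c%:A)%:M by rewrite -f_alg agree.
exact: (rmorph_eq_of_central_scalar r12_scalar hP V_central_scalar agree).
Qed.
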